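(* Let $G$ be a finite simple graph and $\mathcal{N}G$ its normal graph algebra over a field $\mathbb{F}$ of characteristic not $2$. Let $\mathrm{ann}\,G=\{u\in U_G : uv=0 \text{ for all } v\in U_G\}$. Then $\mathrm{ann}\,G=\{u\in U_G: u^2=0\}$, and also $\mathrm{ann}\,G=\bigcap_{\mathfrak{e}\in EG}\ker\lambda_{\mathfrak{e}}$.
   Context: For a finite simple graph $G$ with vertex set $VG$ and edge set $EG$ (edge with endpoints $x,y$ written $[x,y]$, adjacency written $x\sim y$), the normal graph algebra $\mathcal{N}G$ is the $\mathbb{F}$-vector space $U_G\oplus\mathfrak{Z}_G$, where $U_G$ has basis $VG$ and $\mathfrak{Z}_G$ has basis $EG$, with commutative bilinear product determined on basis elements by: for distinct vertices $x,y$, $xy=[x,y]$ if $x\sim y$ and $xy=0$ otherwise; $x^2=\sum_{y\sim x}[x,y]$; all products involving an element of $\mathfrak{Z}_G$ are $0$. Equivalently, for $u=\sum_x\theta_x x$ and $v=\sum_x\eta_x x$, $uv=\sum_{[x,y]\in EG}(\theta_x+\theta_y)(\eta_x+\eta_y)[x,y]$. For an edge $\mathfrak{e}=[a,b]$, $\lambda_{\mathfrak{e}}$ is the linear functional on $U_G$ with $\lambda_{\mathfrak{e}}(a)=\lambda_{\mathfrak{e}}(b)=1$ and $\lambda_{\mathfrak{e}}(c)=0$ for all other vertices $c$. *)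

From HB Require Import structures.
From mathcomp Require Import all_boot all_order all_algebra.
Set Implicit Arguments. Unset Strict Implicit. Unset Printing Implicit Defensive.
Import GRing.Theory.
Local Open Scope ring_scope.

Section NormalGraphAlgebra.
Variables (T : finType) (adj : rel T).

Definition is_edge (A : {set T}) : bool :=
  [exists x, exists y, adj x y && (A == [set x; y])].

Definition edge := {A : {set T} | is_edge A}.

Definition UG (F : fieldType) := {ffun T -> F}.
Definition ZG (F : fieldType) := {ffun edge -> F}.

(* lambda_e for e = [a,b]: lambda_e(a) = lambda_e(b) = 1, 0 on other
   vertices, extended linearly: lambda_e(u) = theta_a + theta_b. *)
Definition lambda (F : fieldType) (E : edge) (u : UG F) : F :=
  \sum_(x in val E) u x.

(* Product of two elements of U_G in NG:
   uv = sum_{[x,y] in EG} (theta_x+theta_y)(eta_x+eta_y) [x,y]. *)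
Definition mulU (F : fieldType) (u v : UG F) : ZG F :=
  [ffun E => lambda E u * lambda E v].

Definition ann (F : fieldType) (u : UG F) : Prop :=
  forall v : UG F, mulU u v = 0.

End NormalGraphAlgebra.

From mathcomp Require Import all_boot all_order all_algebra.
Local Open Scope ring_scope.
Import GRing.Theory.

(* The [e]-coordinate of [u v] is [lambda_e u * lambda_e v]. Hence [u u = 0]
   forces every [lambda_e u] to vanish (a field has no nonzero nilpotents), and
   then [u v = 0] for every [v]. *)

Section Annihilator.
Variables (F : fieldType) (T : finType) (adj : rel T).

Lemma mulU_eq0 (u v : UG T F) :
  mulU adj u v = 0 <-> (forall E : edge adj, lambda E u * lambda E v = 0).
Proof.
split=> [uv0 E | uv0]; last by apply/ffunP => E; rewrite !ffunE uv0.
by have := congr1 (fun f : ZG adj F => f E) uv0; rewrite /= !ffunE.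
Qed.

Lemma mulU_self_eq0 (u : UG T F) :
  mulU adj u u = 0 <-> (forall E : edge adj, lambda E u = 0).
Proof.
split=> [/mulU_eq0 uu0 E | u0]; last by apply/mulU_eq0 => E; rewrite u0 mul0r.
by have /eqP := uu0 E; rewrite mulf_eq0 orbb => /eqP.
Qed.

Lemma annP (u : UG T F) :
  ann adj u <-> (forall E : edge adj, lambda E u = 0).
Proof.
split=> [annu | u0 v]; first exact/mulU_self_eq0/annu.
by apply/mulU_eq0 => E; rewrite u0 mul0r.
Qed.

End Annihilator.

Theorem proposition5p3 (F : fieldType) (T : finType) (adj : rel T)
  (adj_sym : symmetric adj) (adj_irr : irreflexive adj)
  (charF : ~~ (2%N \in [pchar F])) :
  (forall u : UG T F, ann adj u <-> mulU adj u u = 0) /\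
  (forall u : UG T F, ann adj u <-> (forall E : edge adj, lambda E u = 0)).
Proof.
split=> u; last exact: annP.
split=> [/annP/mulU_self_eq0 // | /mulU_self_eq0/annP //].
Qed.
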